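(* Let $p$ be a prime, $e\ge 1$, and $G$ a finite abelian group of order $p^e$. For a representation $\rho$ of level $k$, let $j_\rho\colon\mathbf{Z}[G]\to\mathbf{Z}[\omega_k]$ be the ring homomorphism induced by $g\mapsto\rho(g)$, where $\omega_k=\exp(2\pi i/p^k)$. If $\rho$ and $\tau$ are not equivalent, then $j_\rho(b_\tau)=0$. Furthermore $j_1(b_1)=p^e$, and $j_\rho(b_\rho)=p^{e-k}(1-\omega)$ if $\rho$ has level $k>0$.
   Context: A representation is a group homomorphism $\rho\colon G\to\mathbf{C}^*$; it has level $k$ if $\rho(G)$ has $p^k$ elements (so $\rho(G)\subset\mathbf{Z}[\omega_k]$). Two representations are equivalent if they have the same kernel. Write $\omega=\exp(2\pi i/p)$. For $\rho$ of level $k>0$ set $b_\rho=\sum_{x\in G,\ \rho(x)=1}x-\sum_{\xi\in G,\ \rho(\xi)=\omega}\xi\in\mathbf{Z}[G]$. For the trivial representation $1$ set $b_1=\sum_{x\in G}x$. *)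

From HB Require Import structures.
From mathcomp Require Import all_boot all_order all_algebra all_fingroup all_field.
Set Implicit Arguments. Unset Strict Implicit. Unset Printing Implicit Defensive.
Import GRing.Theory Num.Theory.
Local Open Scope ring_scope.

(* exp(2 pi i / n) for n > 0: n.-root (-1) is the n-th root of -1 with minimal *)
(* nonnegative argument, i.e. exp(i pi / n); its square is exp(2 pi i / n).    *)
Definition expi2pi (n : nat) : algC := (n.-root (-1)) ^+ 2.

Definition omega (p : nat) : algC := expi2pi p.

Definition is_rep (gT : finGroupType) (rho : gT -> algC) : Prop :=
  {morph rho : x y / (x * y)%g >-> x * y} /\ (forall x, rho x != 0).

Definition img_card (gT : finGroupType) (rho : gT -> algC) : nat :=
  size (undup [seq rho x | x : gT]).

Definition has_level (p : nat) (gT : finGroupType) (rho : gT -> algC) (k : nat) : Prop :=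
  img_card rho = (p ^ k)%N.

(* equivalent = same kernel *)
Definition rep_equiv (gT : finGroupType) (rho tau : gT -> algC) : Prop :=
  [set x : gT | rho x == 1] = [set x : gT | tau x == 1].

Definition ZG (gT : finGroupType) := {ffun gT -> int}.

Definition jmap (gT : finGroupType) (rho : gT -> algC) (a : ZG gT) : algC :=
  \sum_(x : gT) (a x)%:~R * rho x.

Definition triv_rep (gT : finGroupType) : gT -> algC := fun _ => 1.

Definition bvec (p : nat) (gT : finGroupType) (rho : gT -> algC) : ZG gT :=
  if img_card rho == 1%N then [ffun x => 1%:Z]
  else [ffun x => (rho x == 1)%:Z - (rho x == omega p)%:Z].

From mathcomp Require Import all_boot all_order all_algebra all_fingroup all_solvable all_field.
Import GRing.Theory Num.Theory.
Set Implicit Arguments. Unset Strict Implicit.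
Local Open Scope ring_scope.

(* Write S(c) for the sum of rho x over the fibre tau x = c, so that
   j_rho(b_tau) = S(1) - S(omega).  Translating by y multiplies S(c) by rho y
   and moves it to the fibre over tau y * c.  If some y in ker tau has
   rho y <> 1, this forces every S(c) to vanish.  Otherwise ker tau is a proper
   subgroup of ker rho, and an element h of ker rho with tau(h^n) = omega
   identifies S(omega) with S(1).  For tau = rho the same translation gives
   S(omega) = omega S(1), and S(1) = |ker rho| = p^(e-k) since all fibres of
   rho have the size of its kernel. *)

Definition rep_ker (gT : finGroupType) (rho : gT -> algC) : {set gT} :=
  [set x | rho x == 1].

Lemma omega_exp_prime (p : nat) : (0 < p)%N -> omega p ^+ p = 1.
Proof. by move=> p_gt0; rewrite -exprM mulnC exprM rootCK // sqrrN expr1n. Qed.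

Lemma exp_eq_omega (p n : nat) (z : algC) :
  prime p -> z ^+ (p ^ n) = 1 -> z != 1 -> exists j, z ^+ j = omega p.
Proof.
move=> p_pr z_pn z_neq1; have p_gt0 := prime_gt0 p_pr.
have pn_gt0 : (0 < p ^ n)%N by rewrite expn_gt0 p_gt0.
have [m prim_z] := prim_order_exists pn_gt0 z_pn.
case/(dvdn_pfactor _ _ p_pr) => i _ def_m.
have i_gt0 : (0 < i)%N.
  rewrite lt0n; apply: contraNneq z_neq1 => i0.
  by rewrite -[z]expr1 -(prim_expr_order prim_z) def_m i0.
have p_dvd_m : (p %| m)%N by rewrite def_m dvdn_exp.
have [j def_omega] :=
  prim_rootP (dvdn_prim_root prim_z p_dvd_m) (omega_exp_prime p_gt0).
by exists (m %/ p * j)%N; rewrite exprM def_omega.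
Qed.

Section Representation.

Variables (gT : finGroupType) (rho : gT -> algC).
Hypothesis rho_rep : is_rep rho.

Lemma repM : {morph rho : x y / (x * y)%g >-> x * y}.
Proof. exact: rho_rep.1. Qed.

Lemma rep_neq0 x : rho x != 0.
Proof. exact: rho_rep.2. Qed.

Lemma rep1 : rho 1%g = 1.
Proof. by apply: (mulfI (rep_neq0 1%g)); rewrite -repM mulg1 mulr1. Qed.

Lemma repV x : rho x^-1%g = (rho x)^-1.
Proof. by apply/esym/mulr1_eq; rewrite -repM mulgV rep1. Qed.

Lemma repX x n : rho (x ^+ n)%g = rho x ^+ n.
Proof. by elim: n => [|n IHn]; rewrite ?rep1 // expgS repM IHn exprS. Qed.

Lemma rep_exp_card x : rho x ^+ #|gT| = 1.
Proof. by rewrite -repX -cardsT expg_cardG ?inE // rep1. Qed.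

Lemma rep_exp_omega p e x : prime p -> #|gT| = (p ^ e)%N -> rho x != 1 ->
  exists n, rho (x ^+ n)%g = omega p.
Proof.
move=> p_pr cardG rho_x_neq1.
have rho_x_pe : rho x ^+ (p ^ e) = 1 by rewrite -cardG rep_exp_card.
have [n <-] := exp_eq_omega p_pr rho_x_pe rho_x_neq1.
by exists n; rewrite repX.
Qed.

Lemma card_rep_fiber x : #|[set y | rho y == rho x]| = #|rep_ker rho|.
Proof.
rewrite -(card_lcoset (rep_ker rho) x); apply: eq_card => y.
rewrite mem_lcoset !inE repM repV mulrC.
by rewrite -[rho y == _](inj_eq (mulIf (invr_neq0 (rep_neq0 x)))) mulfV ?rep_neq0.
Qed.

Lemma card_rep_img_ker : #|gT| = (img_card rho * #|rep_ker rho|)%N.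
Proof.
set s := [seq rho x | x : gT].
have count_img v : v \in undup s -> count_mem v s = #|rep_ker rho|.
  rewrite mem_undup => /mapP[x _ ->].
  rewrite -(card_rep_fiber x) count_map cardsE cardE -size_filter.
  by rewrite /enum_mem filter_predT.
rewrite cardT -(size_map rho) -/s -(perm_size (perm_count_undup s)) size_flatten.
rewrite /shape -map_comp.
rewrite (@eq_in_map _ _ _ (fun=> #|rep_ker rho|) (undup s)).1; last first.
  by move=> v /count_img /= <-; rewrite size_nseq.
by rewrite sumnE big_map big_const_seq iter_addn_0 count_predT mulnC.
Qed.

Lemma img_card_eq1 : (img_card rho == 1%N) = (rep_ker rho == setT).
Proof.
have ker_gt0 : (0 < #|rep_ker rho|)%N by apply/card_gt0P; exists 1%g; rewrite inE rep1.
have : (0 < #|gT|)%N by apply/card_gt0P; exists 1%g.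
rewrite eqEcard subsetT cardsT card_rep_img_ker /= -{3}[#|_|]mul1n.
by rewrite muln_gt0 => /andP[img_gt0 _]; rewrite leq_pmul2r // eqn_leq img_gt0 andbT.
Qed.

Lemma sum_rep_ker : \sum_(x | rho x == 1) rho x = #|rep_ker rho|%:R.
Proof. by rewrite (eq_bigr (fun=> 1)) => [|x /eqP //]; rewrite sumr_const cardsE. Qed.

Lemma card_rep_ker_level p e k : (1 < p)%N -> #|gT| = (p ^ e)%N ->
  has_level p rho k -> #|rep_ker rho| = (p ^ (e - k))%N.
Proof.
move=> p_gt1 cardG level_k; have := card_rep_img_ker; rewrite cardG level_k => pe.
have k_le_e : (k <= e)%N by rewrite -(dvdn_Pexp2l _ _ p_gt1) pe dvdn_mulr.
by rewrite expnB ?(ltnW p_gt1) // pe mulKn ?expn_gt0 ?(ltnW p_gt1).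
Qed.

End Representation.

Lemma triv_rep_is_rep (gT : finGroupType) : is_rep (@triv_rep gT).
Proof. by split=> [x y|x]; rewrite /triv_rep ?mulr1 ?oner_neq0. Qed.

Section TwoRepresentations.

Variables (gT : finGroupType) (rho tau : gT -> algC).
Hypotheses (rho_rep : is_rep rho) (tau_rep : is_rep tau).

Lemma sum_fiber_translate y c :
  \sum_(x | tau x == tau y * c) rho x = rho y * \sum_(x | tau x == c) rho x.
Proof.
rewrite (reindex_inj (mulgI y)) mulr_sumr /=.
apply: eq_big => [x|x _]; last exact: repM.
by rewrite repM // (inj_eq (mulfI (rep_neq0 tau_rep y))).
Qed.

Lemma sum_fiber_eq0 y c : tau y = 1 -> rho y != 1 ->
  \sum_(x | tau x == c) rho x = 0.
Proof.
move=> tau_y rho_y_neq1; have := sum_fiber_translate y c.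
rewrite tau_y mul1r -{1}(mul1r (\sum_(x | tau x == c) rho x)) => /eqP.
by rewrite -subr_eq0 -mulrBl mulf_eq0 subr_eq0 eq_sym (negbTE rho_y_neq1) => /eqP.
Qed.

End TwoRepresentations.

Lemma jmap_bvec (gT : finGroupType) (rho tau : gT -> algC) p :
  img_card tau != 1%N -> jmap rho (bvec p tau) =
  \sum_(x | tau x == 1) rho x - \sum_(x | tau x == omega p) rho x.
Proof.
move=> tau_nontriv; rewrite /bvec (negbTE tau_nontriv) /jmap.
rewrite !(big_mkcond (fun x => tau x == _)).
rewrite -sumrB; apply: eq_bigr => x _; rewrite ffunE intrB mulrBl.
by case: (tau x == 1); case: (tau x == omega p); rewrite ?mul1r ?mul0r.
Qed.

Lemma jmap_bvec_trivial (gT : finGroupType) (rho tau : gT -> algC) p :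
  is_rep tau -> img_card tau = 1%N ->
  jmap rho (bvec p tau) = \sum_(x | tau x == 1) rho x.
Proof.
move=> tau_rep /eqP tau_triv; rewrite /bvec tau_triv /jmap.
move: tau_triv; rewrite img_card_eq1 // => /eqP ker_tau.
have tau1 x : tau x == 1 by move: (in_setT x); rewrite -ker_tau inE.
rewrite [RHS](eq_bigl predT) => [|x]; last by rewrite tau1.
by apply: eq_bigr => x _; rewrite ffunE mul1r.
Qed.

Section PrimePowerOrder.

Variables (p e : nat) (gT : finGroupType).
Hypotheses (p_pr : prime p) (cardG : #|gT| = (p ^ e)%N).

Lemma jmap_bvec_nonequiv (rho tau : gT -> algC) :
  is_rep rho -> is_rep tau -> ~ rep_equiv rho tau -> jmap rho (bvec p tau) = 0.
Proof.
move=> rho_rep tau_rep not_equiv.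
have [ker_tau_rho | /subsetPn[y]] := boolP (rep_ker tau \subset rep_ker rho); last first.
  rewrite !inE => /eqP tau_y rho_y_neq1.
  have S0 c := sum_fiber_eq0 rho_rep tau_rep c tau_y rho_y_neq1.
  have [/(jmap_bvec_trivial rho p tau_rep) -> // | /jmap_bvec ->] :=
    eqVneq (img_card tau) 1%N.
  by rewrite !S0 subrr.
have /subsetPn[h ker_rho_h ker_tau_h] : ~~ (rep_ker rho \subset rep_ker tau).
  apply/negP => ker_rho_tau; apply: not_equiv.
  by apply/eqP; rewrite eqEsubset ker_rho_tau.
have tau_nontriv : img_card tau != 1%N.
  by rewrite img_card_eq1 //; apply: contraNneq ker_tau_h => ->; apply: in_setT.
rewrite !inE in ker_rho_h ker_tau_h.
have [n tau_hn] := rep_exp_omega tau_rep p_pr cardG ker_tau_h.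
have rho_hn : rho (h ^+ n)%g = 1 by rewrite repX // (eqP ker_rho_h) expr1n.
rewrite (jmap_bvec _ _ tau_nontriv) -tau_hn -[tau (h ^+ n)%g]mulr1.
by rewrite sum_fiber_translate // rho_hn mul1r subrr.
Qed.

Lemma jmap_bvec_triv_rep : jmap (@triv_rep gT) (bvec p (@triv_rep gT)) = (p ^ e)%:R.
Proof.
have triv_is_rep := triv_rep_is_rep gT.
have ker_triv : rep_ker (@triv_rep gT) = setT.
  by apply/setP => x; rewrite !inE /triv_rep eqxx.
rewrite (jmap_bvec_trivial _ _ triv_is_rep); last first.
  by apply/eqP; rewrite img_card_eq1 ?ker_triv.
by rewrite sum_rep_ker // ker_triv cardsT cardG.
Qed.

Lemma jmap_bvec_level (rho : gT -> algC) k : is_rep rho -> has_level p rho k ->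
  (0 < k)%N -> jmap rho (bvec p rho) = (p ^ (e - k))%:R * (1 - omega p).
Proof.
move=> rho_rep level_k k_gt0; have p_gt1 := prime_gt1 p_pr.
have rho_nontriv : img_card rho != 1%N.
  by rewrite level_k -(expn0 p) (inj_eq (expnI p_gt1)) -lt0n.
have /subsetPn[g _] : ~~ (setT \subset rep_ker rho) by rewrite subTset -img_card_eq1.
rewrite inE => rho_g_neq1; have [n rho_gn] := rep_exp_omega rho_rep p_pr cardG rho_g_neq1.
rewrite (jmap_bvec _ _ rho_nontriv) -{1}rho_gn -{1}[rho (g ^+ n)%g]mulr1.
rewrite sum_fiber_translate // rho_gn sum_rep_ker //.
by rewrite (card_rep_ker_level rho_rep p_gt1 cardG level_k) mulrBr mulr1 mulrC.
Qed.

End PrimePowerOrder.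

Theorem mainTheorem2 (p e : nat) (gT : finGroupType) :
  prime p -> (1 <= e)%N -> abelian [set: gT] -> #|gT| = (p ^ e)%N ->
  [/\ (forall rho tau : gT -> algC, is_rep rho -> is_rep tau ->
         ~ rep_equiv rho tau -> jmap rho (bvec p tau) = 0),
      jmap (@triv_rep gT) (bvec p (@triv_rep gT)) = (p ^ e)%:R
    & (forall (rho : gT -> algC) (k : nat), is_rep rho -> has_level p rho k ->
         (0 < k)%N -> jmap rho (bvec p rho) = (p ^ (e - k))%:R * (1 - omega p))].
Proof.
move=> p_pr _ _ cardG; split.
- exact: (@jmap_bvec_nonequiv p e gT p_pr cardG).
- exact: (@jmap_bvec_triv_rep p e gT cardG).
- exact: (@jmap_bvec_level p e gT p_pr cardG).
Qed.
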